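(* Let $\beta>0$ and $t$ a positive integer. Suppose that for each $k=0,1,\dots,t$ the following hold: $\tilde{\boldsymbol{w}}^k=(\tilde{\boldsymbol{x}}^k,\tilde{\boldsymbol{\lambda}}^k)\in\Omega$ satisfies $f(\boldsymbol{x})-f(\tilde{\boldsymbol{x}}^k)+(\boldsymbol{w}-\tilde{\boldsymbol{w}}^k)^T\boldsymbol{\Gamma}(\tilde{\boldsymbol{w}}^k)\ge(\boldsymbol{w}-\tilde{\boldsymbol{w}}^k)^T\boldsymbol{Q}_k(\boldsymbol{w}^k-\tilde{\boldsymbol{w}}^k)$ for all $\boldsymbol{w}\in\Omega$; $\boldsymbol{M}_k$ is invertible with $\boldsymbol{H}_k=\boldsymbol{Q}_k\boldsymbol{M}_k^{-1}$ symmetric positive definite and $\boldsymbol{G}_k=\boldsymbol{Q}_k^T+\boldsymbol{Q}_k-\beta\boldsymbol{M}_k^T\boldsymbol{H}_k\boldsymbol{M}_k\succ0$; and $\boldsymbol{w}^{k+1}=\boldsymbol{w}^k-\beta\boldsymbol{M}_k(\boldsymbol{w}^k-\tilde{\boldsymbol{w}}^k)$. Suppose also $\boldsymbol{H}_{k-1}-\boldsymbol{H}_k\succeq0$ for $k=1,\dots,t$. Let $\tilde{\boldsymbol{x}}_t=\frac1{1+t}\sum_{k=0}^t\tilde{\boldsymbol{x}}^k$, $\tilde{\boldsymbol{w}}_t=\frac1{1+t}\sum_{k=0}^t\tilde{\boldsymbol{w}}^k$. Then $\tilde{\boldsymbol{w}}_t\in\Omega$ and $$f(\tilde{\boldsymbol{x}}_t)-f(\boldsymbol{x})+(\tilde{\boldsymbol{w}}_t-\boldsymbol{w})^T\boldsymbol{\Gamma}(\boldsymbol{w})\le\frac{1}{2\beta(1+t)}\|\boldsymbol{w}-\boldsymbol{w}^0\|_{\boldsymbol{H}_0}^2\quad\text{for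 all }\boldsymbol{w}=(\boldsymbol{x},\boldsymbol{\lambda})\in\Omega.$$
   Context: $\mathcal{X}\subset\mathbb{R}^n$ nonempty closed convex; $f:\mathbb{R}^n\to\mathbb{R}$ convex; $\phi_1,\dots,\phi_m$ convex and continuously differentiable; $\Phi=(\phi_1,\dots,\phi_m)^T$ with $m\times n$ Jacobian $\mathcal{D}\Phi$; $\Omega=\mathcal{X}\times\mathbb{R}^m_+$; $\boldsymbol{\Gamma}(\boldsymbol{w})=(\mathcal{D}\Phi(\boldsymbol{x})^T\boldsymbol{\lambda},-\Phi(\boldsymbol{x}))$. For $r_k,s_k>0$, $\boldsymbol{Q}_k=\begin{pmatrix} r_k\boldsymbol{I}_n & -\mathcal{D}\Phi(\tilde{\boldsymbol{x}}^k)^T\\ \boldsymbol{0} & s_k\boldsymbol{I}_m\end{pmatrix}$. $\|\boldsymbol{v}\|_{\boldsymbol{H}}^2=\boldsymbol{v}^T\boldsymbol{H}\boldsymbol{v}$. *)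

From HB Require Import structures.
From mathcomp Require Import all_boot all_order all_algebra.
From mathcomp Require Import all_classical all_reals all_analysis.
Set Implicit Arguments. Unset Strict Implicit. Unset Printing Implicit Defensive.
Import Order.TTheory GRing.Theory Num.Theory.
Import numFieldNormedType.Exports.
Local Open Scope classical_set_scope.
Local Open Scope ring_scope.

Section Defs.
Variable R : realType.

Definition convex_set_cV n (X : set 'cV[R]_n) : Prop :=
  forall x y (a : R), X x -> X y -> 0 <= a <= 1 -> X (a *: x + (1 - a) *: y).

Definition convex_fun_cV n (f : 'cV[R]_n -> R) : Prop :=
  forall x y (a : R), 0 <= a <= 1 ->
    f (a *: x + (1 - a) *: y) <= a * f x + (1 - a) * f y.

Definition Phi_vec n m (phi : 'I_m -> 'cV[R]_n -> R) (x : 'cV[R]_n) : 'cV[R]_m :=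
  \col_i phi i x.

Definition jacPhi n m (phi : 'I_m -> 'cV[R]_n -> R) (x : 'cV[R]_n) : 'M[R]_(m, n) :=
  \matrix_(i, j) ('D_(delta_mx j 0 : 'cV[R]_n) (phi i) x).

(* Omega = X x R^m_+ as a set of vectors w = (x, lambda) in R^(n+m) *)
Definition Omega n m (X : set 'cV[R]_n) : set 'cV[R]_(n + m) :=
  [set w | X (usubmx w) /\ forall i, 0 <= dsubmx w i 0].

Definition Gamma n m (phi : 'I_m -> 'cV[R]_n -> R) (w : 'cV[R]_(n + m)) : 'cV[R]_(n + m) :=
  col_mx ((jacPhi phi (usubmx w))^T *m dsubmx w) (- Phi_vec phi (usubmx w)).

Definition Qmat n m (phi : 'I_m -> 'cV[R]_n -> R) (r s : R) (xt : 'cV[R]_n)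
  : 'M[R]_(n + m) :=
  block_mx (r%:M) (- (jacPhi phi xt)^T) 0 (s%:M).

Definition qform N (u : 'cV[R]_N) (A : 'M[R]_N) (v : 'cV[R]_N) : R :=
  (u^T *m A *m v) 0 0.

Definition Hnorm2 N (v : 'cV[R]_N) (H : 'M[R]_N) : R := qform v H v.

Definition symmx_p N (A : 'M[R]_N) : Prop := A^T = A.
Definition pdmx_p N (A : 'M[R]_N) : Prop := forall v : 'cV[R]_N, v != 0 -> 0 < qform v A v.
Definition psdmx_p N (A : 'M[R]_N) : Prop := forall v : 'cV[R]_N, 0 <= qform v A v.

End Defs.

From HB Require Import structures.
From mathcomp Require Import all_boot all_order all_algebra.
From mathcomp Require Import all_classical all_reals all_analysis.
From mathcomp Require Import ring lra.
Set Implicit Arguments. Unset Strict Implicit. Unset Printing Implicit Defensive.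
Import Order.TTheory GRing.Theory Num.Theory.
Import numFieldNormedType.Exports.
Local Open Scope classical_set_scope.
Local Open Scope ring_scope.

(* Write L_k(w) = f(x~k) - f(x) + (w~k - w)^T Gamma(w) for the gap of the
   k-th predictor against w = (x, lambda) in Omega.  The proof has three parts.
   1. Monotonicity of Gamma on R^n x R^m_+ (from the gradient inequality of the
      convex differentiable phi_i) turns the variational inequality of the
      predictor into  L_k(w) <= - (w - w~k)^T Q_k (w^k - w~k).
   2. The correction step w^{k+1} = w^k - beta M_k (w^k - w~k), H_k = Q_k M_k^-1
      symmetric and G_k > 0 bound the right-hand side by
      (2 beta)^-1 (||w - w^k||_{H_k}^2 - ||w - w^{k+1}||_{H_k}^2).
   3. Since H_k <= H_{k-1}, these bounds telescope; Jensen's inequality for f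
      and linearity of the pairing in w~ bound the gap at the ergodic average
      by the average of the L_k.  Membership of the average in Omega is
      Jensen's inequality for the convex set Omega. *)

Lemma convex_derive_le (R : realType) n (g : 'cV[R]_n -> R) x d :
  convex_fun_cV g -> derivable g x d -> 'D_d g x <= g (x + d) - g x.
Proof.
move=> cg dg.
set q := fun h : R => h^-1 *: ((g \o shift x) (h *: d) - g x).
have cq : cvg (q @ 0^'+).
  apply/cvg_ex; exists ('D_d g x) => A /dg /nbhs_ballP [_ /posnumP[e] xe_A].
  by exists e%:num => //= y ye y0; apply: xe_A => //; rewrite gt_eqF.
rewrite /derive (cvg_at_rightE _ _ dg); apply: limr_le => //.
near=> h.
have h0 : 0 < h by near: h; exact: nbhs_right_gt.
have h1 : h <= 1 by near: h; exact: nbhs_right_le.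
rewrite /q /= ler_pdivrMl // /GRing.scale /=.
have := cg (x + d) x h; rewrite h1 ltW //= => /(_ isT).
have -> : h *: (x + d) + (1 - h) *: x = h *: d + x.
  by rewrite scalerDr scalerBl scale1r addrC addrA subrK addrC.
by move=> conv; rewrite mulrBr; lra.
Unshelve. all: by end_near. Qed.

Lemma jacPhi_mulE (R : realType) n m (phi : 'I_m -> 'cV[R]_n -> R) x d i :
  differentiable (phi i) x -> (jacPhi phi x *m d) i 0 = 'D_d (phi i) x.
Proof.
move=> dx; rewrite mxE (deriveE _ dx) {2}(matrix_sum_delta d) linear_sum /=.
apply: eq_bigr => j _; rewrite big_ord1 linearZ /= mxE (deriveE _ dx).
by rewrite mulrC.
Qed.

Lemma dotE (R : realType) N (a b : 'cV[R]_N) :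
  (a^T *m b) 0 0 = \sum_k a k 0 * b k 0.
Proof. by rewrite mxE; apply: eq_bigr => k _; rewrite mxE. Qed.

(* Gamma is monotone on R^n x R^m_+ when the phi_i are convex and
   differentiable: this is what makes the gap L_k(w) comparable with the
   variational inequality at w~k. *)
Lemma Gamma_monotone (R : realType) n m (phi : 'I_m -> 'cV[R]_n -> R) w1 w2 :
  (forall i, convex_fun_cV (phi i)) ->
  (forall i (x : 'cV[R]_n), differentiable (phi i) x) ->
  (forall i, 0 <= dsubmx w1 i 0) -> (forall i, 0 <= dsubmx w2 i 0) ->
  0 <= ((w1 - w2)^T *m (Gamma phi w1 - Gamma phi w2)) 0 0.
Proof.
move=> cphi dphi w1_nneg w2_nneg.
have -> : w1 - w2 = col_mx (usubmx w1 - usubmx w2) (dsubmx w1 - dsubmx w2).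
  by rewrite -{1}[w1]vsubmxK -{1}[w2]vsubmxK opp_col_mx add_col_mx.
rewrite /Gamma opp_col_mx add_col_mx tr_col_mx mul_row_col mxE.
set x1 := usubmx w1; set x2 := usubmx w2.
rewrite mulmxBr !mulmxA -!trmx_mul.
have subE (A B : 'M[R]_1) : (A - B) 0 0 = A 0 0 - B 0 0 by rewrite !mxE.
rewrite subE !dotE -sumrB -big_split /=; apply: sumr_ge0 => i _.
rewrite !jacPhi_mulE // !mxE.
have a0 := w1_nneg i; have b0 := w2_nneg i; rewrite mxE in a0; rewrite mxE in b0.
have G1 := convex_derive_le (cphi i) (@diff_derivable _ _ _ _ x1 (x2 - x1) (dphi i x1)).
have G2 := convex_derive_le (cphi i) (@diff_derivable _ _ _ _ x2 (x1 - x2) (dphi i x2)).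
rewrite [x1 + _]addrC subrK in G1; rewrite [x2 + _]addrC subrK in G2.
rewrite (deriveE _ (dphi i x1)) -opprB linearN /= -(deriveE _ (dphi i x1)) in G1.
set D1 := 'D_(x1 - x2) (phi i) x1 in G1 *.
set D2 := 'D_(x1 - x2) (phi i) x2 in G2 *.
set a := w1 _ 0 in a0 *; set b := w2 _ 0 in b0 *.
have H1 : 0 <= a * (D1 - phi i x1 + phi i x2) by apply: mulr_ge0 => //; lra.
have H2 : 0 <= b * (phi i x1 - phi i x2 - D2) by apply: mulr_ge0 => //; lra.
nra.
Qed.

Lemma Omega_convex (R : realType) n m (X : set 'cV[R]_n) :
  convex_set_cV X -> convex_set_cV (Omega (m:=m) X).
Proof.
move=> cX w1 w2 a [X1 L1] [X2 L2] a01; split.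
  by rewrite linearD !linearZ /=; exact: cX.
move=> i; rewrite !mxE; have := L1 i; have := L2 i; rewrite !mxE.
by case/andP: a01 => a0 a1 b0 b1; apply: addr_ge0; apply: mulr_ge0; lra.
Qed.

Lemma avg_step (R : realType) (V : lmodType R) (T : nat) (S y : V) :
  let a := (T.+2%:R : R)^-1 in
  a *: (S + y) = a *: y + (1 - a) *: ((T.+1%:R)^-1 *: S)
  /\ (1 - a) * (T.+1%:R)^-1 = a /\ 0 <= a <= 1.
Proof.
move=> a.
have e : (1 - a) * (T.+1%:R)^-1 = a.
  rewrite /a -[T.+2]addn1 natrD; field.
  have p : (0 : R) <= T%:R by rewrite ler0n.
  by apply/andP; split; apply/eqP; lra.
split; last split => //; first by rewrite scalerA e scalerDr addrC.
by rewrite invr_ge0 ler0n /= invf_le1 ?ltr0n // ler1n.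
Qed.

Lemma jensen_avg_fun (R : realType) n (g : 'cV[R]_n -> R) (y : nat -> 'cV[R]_n) T :
  convex_fun_cV g ->
  g ((T.+1%:R)^-1 *: \sum_(k < T.+1) y k) <= (T.+1%:R)^-1 * \sum_(k < T.+1) g (y k).
Proof.
move=> cg; elim: T => [|T IH]; first by rewrite !big_ord1 invr1 scale1r mul1r.
rewrite big_ord_recr /= [X in _ <= _ * X]big_ord_recr /=.
have [-> [e /andP[a0 a1]]] := avg_step T (\sum_(k < T.+1) y k) (y T.+1).
set a := (T.+2%:R : R)^-1 in e a0 a1 *.
apply: le_trans (cg _ _ a _) _; first by rewrite a0 a1.
rewrite mulrDr addrC; apply: lerD => //.
have -> : a * \sum_(i < T.+1) g (y i) = (1 - a) * (T.+1%:R^-1 * \sum_(i < T.+1) g (y i)).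
  by rewrite mulrA e.
apply: ler_wpM2l => //; lra.
Qed.

Lemma jensen_avg_set (R : realType) n (C : set 'cV[R]_n) (y : nat -> 'cV[R]_n) T :
  convex_set_cV C -> (forall k, (k <= T)%N -> C (y k)) ->
  C ((T.+1%:R)^-1 *: \sum_(k < T.+1) y k).
Proof.
move=> cC; elim: T => [|T IH] Cy; first by rewrite !big_ord1 invr1 scale1r; exact: Cy.
rewrite big_ord_recr /=.
have [-> [_ /andP[a0 a1]]] := avg_step T (\sum_(k < T.+1) y k) (y T.+1).
apply: cC; [exact: Cy | | by rewrite a0 a1].
by apply: IH => k kT; apply: Cy; rewrite (leq_trans kT).
Qed.

(* The gap at the mean of points z_k is at most the mean of the gaps:
   Jensen for the convex f, and linearity of the pairing with g. *)
Lemma avg_gap_le (R : realType) n m (f : 'cV[R]_n -> R)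
    (z : nat -> 'cV[R]_(n + m)) (v g : 'cV[R]_(n + m)) T :
  convex_fun_cV f ->
  f ((T.+1%:R)^-1 *: \sum_(k < T.+1) usubmx (z k)) - f (usubmx v)
    + (((T.+1%:R)^-1 *: \sum_(k < T.+1) z k - v)^T *m g) 0 0
  <= (T.+1%:R)^-1
     * \sum_(k < T.+1) (f (usubmx (z k)) - f (usubmx v) + ((z k - v)^T *m g) 0 0).
Proof.
move=> cf; set c := (T.+1%:R : R)^-1.
have cT : c * T.+1%:R = 1 by rewrite mulVf // pnatr_eq0.
have -> : c *: \sum_(k < T.+1) z k - v = c *: \sum_(k < T.+1) (z k - v).
  by rewrite sumrB sumr_const card_ord scalerBr -scaler_nat scalerA cT scale1r.
have -> : ((c *: \sum_(k < T.+1) (z k - v))^T *m g) 0 0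
    = c * \sum_(k < T.+1) ((z k - v)^T *m g) 0 0.
  by rewrite linearZ /= -scalemxAl mxE linear_sum /= mulmx_suml summxE.
rewrite big_split /= sumrB sumr_const card_ord -mulr_natl !mulrDr mulrN mulrA cT mul1r.
by rewrite lerD2r lerD2r; exact: (@jensen_avg_fun _ _ f (fun k => usubmx (z k)) T cf).
Qed.

Section QuadraticForm.
Variables (R : realType) (N : nat).
Implicit Types (u v : 'cV[R]_N) (A B : 'M[R]_N).

Lemma qformDl u1 u2 A v : qform (u1 + u2) A v = qform u1 A v + qform u2 A v.
Proof. by rewrite /qform linearD /= !mulmxDl mxE. Qed.
Lemma qformDr u A v1 v2 : qform u A (v1 + v2) = qform u A v1 + qform u A v2.
Proof. by rewrite /qform mulmxDr mxE. Qed.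
Lemma qformZl c u A v : qform (c *: u) A v = c * qform u A v.
Proof. by rewrite /qform linearZ /= -!scalemxAl mxE. Qed.
Lemma qformZr c u A v : qform u A (c *: v) = c * qform u A v.
Proof. by rewrite /qform -scalemxAr mxE. Qed.
Lemma qformNl u A v : qform (- u) A v = - qform u A v.
Proof. by rewrite -scaleN1r qformZl mulN1r. Qed.
Lemma qformDm u A B v : qform u (A + B) v = qform u A v + qform u B v.
Proof. by rewrite /qform mulmxDr mulmxDl mxE. Qed.
Lemma qformZm c u A v : qform u (c *: A) v = c * qform u A v.
Proof. by rewrite /qform -scalemxAr -scalemxAl mxE. Qed.
Lemma qformNm u A v : qform u (- A) v = - qform u A v.
Proof. by rewrite -scaleN1r qformZm mulN1r. Qed.
Lemma qform_tr u A v : qform u A v = qform v A^T u.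
Proof.
rewrite /qform; transitivity (((v^T *m A^T *m u)^T) 0 0); last by rewrite [LHS]mxE.
by rewrite !trmx_mul !trmxK mulmxA.
Qed.
Lemma qform_mul u A B v : qform u (A *m B) v = qform u A (B *m v).
Proof. by rewrite /qform !mulmxA. Qed.
Lemma qform_mult u A B v : qform u (A^T *m B) v = qform (A *m u) B v.
Proof. by rewrite /qform trmx_mul !mulmxA. Qed.
Lemma qform0l A v : qform 0 A v = 0.
Proof. by rewrite /qform linear0 !mul0mx mxE. Qed.

Lemma pd_Hnorm2_ge0 A v : pdmx_p A -> 0 <= Hnorm2 v A.
Proof. by move=> pdA; have [->|v0] := eqVneq v 0; [rewrite /Hnorm2 qform0l | exact/ltW/pdA]. Qed.

Lemma psd_Hnorm2_le A B v : psdmx_p (A - B) -> Hnorm2 v B <= Hnorm2 v A.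
Proof. by move/(_ v); rewrite qformDm qformNm /Hnorm2 subr_ge0. Qed.
End QuadraticForm.

Lemma correction_descent (R : realType) N (Q M H : 'M[R]_N) (beta : R) (e a : 'cV[R]_N) :
  0 < beta -> M \in unitmx -> H = Q *m invmx M -> symmx_p H ->
  pdmx_p (Q^T + Q - beta *: (M^T *m H *m M)) ->
  - qform (e + a) Q a <= (2 * beta)^-1 * (Hnorm2 e H - Hnorm2 (e + beta *: (M *m a)) H).
Proof.
move=> b0 Mu eH sH pdG.
have HQ : Q = H *m M by rewrite eH -mulmxA mulVmx // mulmx1.
have G := pd_Hnorm2_ge0 a pdG.
rewrite /Hnorm2 !qformDm qformNm qformZm -mulmxA qform_mult qform_mul in G.
rewrite [qform a Q^T a]qform_tr trmxK HQ qform_mul in G.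
rewrite /Hnorm2 !qformDl !qformDr !qformZl !qformZr [qform (M *m a) H e]qform_tr sH HQ !qform_mul.
set p := qform e H (M *m a) in G *; set q := qform (M *m a) H (M *m a) in G *.
set z := qform e H e.
have -> : (2 * beta)^-1 * (z - (z + beta * p + (beta * p + beta * (beta * q)))) =
  - p - beta / 2 * q by field; lra.
lra.
Qed.

Lemma iterate_gap_le (R : realType) n m (X : set 'cV[R]_n) (f : 'cV[R]_n -> R)
    (phi : 'I_m -> 'cV[R]_n -> R) (beta : R) (Q M H : 'M[R]_(n + m))
    (wk wt v : 'cV[R]_(n + m)) :
  (forall i, convex_fun_cV (phi i)) ->
  (forall i (x : 'cV[R]_n), differentiable (phi i) x) ->
  0 < beta -> M \in unitmx -> H = Q *m invmx M -> symmx_p H ->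
  pdmx_p (Q^T + Q - beta *: (M^T *m H *m M)) ->
  Omega X wt -> Omega X v ->
  qform (v - wt) Q (wk - wt)
    <= f (usubmx v) - f (usubmx wt) + ((v - wt)^T *m Gamma phi wt) 0 0 ->
  f (usubmx wt) - f (usubmx v) + ((wt - v)^T *m Gamma phi v) 0 0
  <= (2 * beta)^-1 * (Hnorm2 (v - wk) H
                      - Hnorm2 (v - (wk - beta *: (M *m (wk - wt)))) H).
Proof.
move=> cphi dphi b0 Mu eH sH pdG [_ Lwt] [_ Lv] vi.
have mono := Gamma_monotone cphi dphi Lwt Lv.
rewrite mulmxBr mxE [X in _ + X]mxE in mono.
have desc := correction_descent (v - wk) (wk - wt) b0 Mu eH sH pdG.
have step : v - (wk - beta *: (M *m (wk - wt))) = v - wk + beta *: (M *m (wk - wt)).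
  by rewrite opprD opprK addrA.
rewrite addrA subrK -step in desc.
have pairN : ((v - wt)^T *m Gamma phi wt) 0 0 = - ((wt - v)^T *m Gamma phi wt) 0 0.
  by rewrite -opprB linearN mulNmx mxE.
lra.
Qed.

Lemma telescope_le (R : realType) (a b : nat -> R) T :
  (forall k, (k < T)%N -> a k.+1 <= b k) ->
  \sum_(k < T.+1) (a k - b k) <= a 0%N - b T.
Proof.
elim: T => [|T IH] ab; first by rewrite big_ord1.
rewrite big_ord_recr /=.
have := IH (fun k kT => ab k (ltnW kT)); have := ab T (ltnSn T); lra.
Qed.

Theorem theorem5 (R : realType) (n m : nat)
  (X : set 'cV[R]_n) (f : 'cV[R]_n -> R) (phi : 'I_m -> 'cV[R]_n -> R)
  (beta : R) (t : nat)
  (r s : nat -> R) (M : nat -> 'M[R]_(n + m))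
  (w wt : nat -> 'cV[R]_(n + m)) :
  (* standing assumptions *)
  (exists x0, X x0) -> closed X -> convex_set_cV X ->
  convex_fun_cV f ->
  (forall i, convex_fun_cV (phi i)) ->
  (forall i (x : 'cV[R]_n), differentiable (phi i) x) ->
  continuous (jacPhi phi) ->
  (* parameters *)
  0 < beta -> (0 < t)%N ->
  (forall k, (k <= t)%N -> 0 < r k /\ 0 < s k) ->
  let Q k := Qmat phi (r k) (s k) (usubmx (wt k)) in
  let H k := Q k *m invmx (M k) in
  (forall k, (k <= t)%N -> Omega X (wt k)) ->
  (forall k, (k <= t)%N -> forall v, Omega X v ->
     qform (v - wt k) (Q k) (w k - wt k)
     <= f (usubmx v) - f (usubmx (wt k)) + ((v - wt k)^T *m Gamma phi (wt k)) 0 0) ->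
  (forall k, (k <= t)%N -> M k \in unitmx) ->
  (forall k, (k <= t)%N -> symmx_p (H k) /\ pdmx_p (H k)) ->
  (forall k, (k <= t)%N ->
     pdmx_p ((Q k)^T + Q k - beta *: ((M k)^T *m H k *m M k))) ->
  (forall k, (k <= t)%N -> w k.+1 = w k - beta *: (M k *m (w k - wt k))) ->
  (forall k, (1 <= k <= t)%N -> psdmx_p (H k.-1 - H k)) ->
  let xbar := (t.+1%:R)^-1 *: \sum_(k < t.+1) usubmx (wt k) in
  let wbar := (t.+1%:R)^-1 *: \sum_(k < t.+1) wt k in
  Omega X wbar /\
  (forall v, Omega X v ->
     f xbar - f (usubmx v) + ((wbar - v)^T *m Gamma phi v) 0 0
     <= (2 * beta * t.+1%:R)^-1 * Hnorm2 (v - w 0%N) (H 0%N)).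
Proof.
move=> _ _ cX cf cphi dphi _ b0 _ _ Q H Om VI Mu HS Gpd Wup Hmono xbar wbar.
split; first exact: jensen_avg_set (Omega_convex cX) Om.
move=> v Ov.
pose dist k := Hnorm2 (v - w k) (H k).
pose dist' k := Hnorm2 (v - w k.+1) (H k).
have step k : (k < t.+1)%N -> f (usubmx (wt k)) - f (usubmx v)
    + ((wt k - v)^T *m Gamma phi v) 0 0 <= (2 * beta)^-1 * (dist k - dist' k).
  move=> kt; rewrite /dist' (Wup k kt).
  exact: iterate_gap_le (Mu k kt) erefl (HS k kt).1 (Gpd k kt) (Om k kt) Ov (VI k kt v Ov).
have sum_le : \sum_(k < t.+1) (2 * beta)^-1 * (dist k - dist' k)
    <= (2 * beta)^-1 * dist 0%N.
  rewrite -mulr_sumr ler_pM2l ?invr_gt0 ?mulr_gt0 //.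
  have dist_mono k : (k < t)%N -> dist k.+1 <= dist' k.
    by move=> kt; exact: psd_Hnorm2_le (Hmono k.+1 kt).
  apply: le_trans (telescope_le dist_mono) _.
  by rewrite gerBl; exact: pd_Hnorm2_ge0 (HS t (leqnn t)).2.
apply: le_trans (avg_gap_le _ _ _ _ cf) _.
rewrite invfM [(2 * beta)^-1 * _]mulrC -mulrA ler_pM2l ?invr_gt0 ?ltr0n //.
by apply: le_trans sum_le; apply: ler_sum => k _; exact: step.
Qed.
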